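(* Every pluri-diamond $u:[0,1]\to{\bf Q}_2(\mathbb{R})$ is a Dirichlet $4$-quasiminimizer on $(0,1)$, i.e. for every interval $(a,b)\subset(0,1)$, $\mathrm{Dir}(u;(a,b))\le 4\,\mathrm{Dir}(v;(a,b))$ where $v$ is Dirichlet minimizing on $(a,b)$ with $v(a)=u(a)$, $v(b)=u(b)$.
   Context: ${\bf Q}_2(\mathbb{R})$ is the space of unordered pairs $[[x]]+[[y]]$ of reals with metric $\mathcal{G}([[x_1]]+[[x_2]],[[y_1]]+[[y_2]])=\min_\sigma(\sum_i|x_i-y_{\sigma(i)}|^2)^{1/2}$. For a Lipschitz $u=[[u_1]]+[[u_2]]$ with $u_1\le u_2$ on an interval $I$, $\mathrm{Dir}(u;I)=\int_I(u_1')^2+(u_2')^2\,dx$; $v$ is Dirichlet minimizing on $(a,b)$ with given endpoint values if it minimizes $\mathrm{Dir}(\cdot;(a,b))$ among (Sobolev) ${\bf Q}_2(\mathbb{R})$-valued functions with those endpoint values. A diamond above $[a,b]$ is a map $u:[a,b]\to{\bf Q}_2(\mathbb{R})$ whose graph is the parallelogram with vertices $(a,h),((a+b)/2,h),((a+b)/2,h+(b-a)/2),(b,h+(b-a)/2)$ for some $h\in\mathbb{R}$ (one branch is constant $h$ on $[a,(a+b)/2]$ then has slope $1$; the other has slope $1$ on $[a,(a+b)/2]$ then is constant). A pluri-diamond is a continuous $u:[0,1]\to{\bf Q}_2(\mathbb{R})$ admitting a partition of $[0,1]$ into intervals $I_j$ such that on each $I_j$, $u$ is either a diamond or of the form $x\mapsto2[[x+p_j]]$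 with $p_j\in\mathbb{R}$. *)

From HB Require Import structures.
From mathcomp Require Import all_boot all_order all_algebra.
From mathcomp Require Import all_classical all_reals all_analysis.
Set Implicit Arguments. Unset Strict Implicit. Unset Printing Implicit Defensive.
Import Order.TTheory GRing.Theory Num.Theory.
Import numFieldNormedType.Exports.
Local Open Scope classical_set_scope.
Local Open Scope ring_scope.

Section Q2.
Variable R : realType.

(* A point [[x]]+[[y]] of Q_2(R) is represented by a pair (x, y); the pair
   is read as unordered: Q2eq identifies (x,y) with (y,x). *)
Definition Q2eq (p q : R * R) : Prop :=
  (p.1 = q.1 /\ p.2 = q.2) \/ (p.1 = q.2 /\ p.2 = q.1).

Definition Gdist (p q : R * R) : R :=
  Num.sqrt (Num.min ((p.1 - q.1) ^+ 2 + (p.2 - q.2) ^+ 2)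
                    ((p.1 - q.2) ^+ 2 + (p.2 - q.1) ^+ 2)).

Definition lo (u : R -> R * R) (x : R) : R := Num.min (u x).1 (u x).2.
Definition hi (u : R -> R * R) (x : R) : R := Num.max (u x).1 (u x).2.

Definition Q2_continuous_on (u : R -> R * R) (a b : R) : Prop :=
  forall x, a <= x <= b -> forall e : R, 0 < e ->
    exists2 d : R, 0 < d & forall y, a <= y <= b -> `|y - x| < d ->
      Gdist (u y) (u x) < e.

Definition Dir (u : R -> R * R) (a b : R) : \bar R :=
  (\int[@lebesgue_measure R]_(x in `]a, b[)
     ((derive1 (lo u) x) ^+ 2 + (derive1 (hi u) x) ^+ 2)%:E)%E.

(* W^{1,2}(a,b) real function (continuous representative on [a,b]):
   f(x) = f(a) + \int_a^x g with g in L^2(a,b). *)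
Definition W12 (f : R -> R) (a b : R) : Prop :=
  exists g : R -> R,
    [/\ measurable_fun `[a, b] g,
        (@lebesgue_measure R).-integrable `[a, b] (EFin \o g),
        (\int[@lebesgue_measure R]_(x in `[a, b]) ((g x) ^+ 2)%:E < +oo)%E &
        forall x, a <= x <= b ->
          (\int[@lebesgue_measure R]_(t in `[a, x]) (g t)%:E)%E = (f x - f a)%:E].

Definition Q2_W12 (v : R -> R * R) (a b : R) : Prop :=
  W12 (lo v) a b /\ W12 (hi v) a b.

Definition dir_minimizing (v : R -> R * R) (a b : R) (pa pb : R * R) : Prop :=
  [/\ Q2_W12 v a b, Q2eq (v a) pa, Q2eq (v b) pb &
      forall w, Q2_W12 w a b -> Q2eq (w a) pa -> Q2eq (w b) pb ->
        (Dir v a b <= Dir w a b)%E].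

Definition diamond (a b h : R) (x : R) : R * R :=
  if x <= (a + b) / 2 then (h, h + (x - a))
  else (h + (x - (a + b) / 2), h + (b - a) / 2).

Definition pluri_diamond (u : R -> R * R) : Prop :=
  Q2_continuous_on u 0 1 /\
  exists (n : nat) (t : nat -> R),
    [/\ t 0%N = 0, t n = 1,
        (forall j, (j < n)%N -> t j < t j.+1) &
        forall j, (j < n)%N ->
          (exists h : R, forall x, t j <= x <= t j.+1 ->
              Q2eq (u x) (diamond (t j) (t j.+1) h x))
          \/
          (exists p : R, forall x, t j <= x <= t j.+1 ->
              Q2eq (u x) (x + p, x + p))].

End Q2.

(* Both branches of a pluri-diamond are nondecreasing with slope at most 1,
   so Dir(u; (a,b)) <= 2 (b - a), while their increments d1, d2 >= 0 over
   (a, b) add up to at least b - a.  Any W^{1,2} competitor v with the same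
   endpoint values has, by Cauchy-Schwarz on each branch (its classical
   derivative agrees a.e. with its weak one, by Lebesgue differentiation),
   Dir(v; (a,b)) >= (d1^2 + d2^2) / (b - a) >= (b - a) / 2. *)

From HB Require Import structures.
From mathcomp Require Import all_boot all_order all_algebra.
From mathcomp Require Import all_classical all_reals all_analysis.
From mathcomp Require Import ring lra measurable_realfun.
Set Implicit Arguments. Unset Strict Implicit. Unset Printing Implicit Defensive.
Import Order.TTheory GRing.Theory Num.Theory.
Local Open Scope ring_scope.

Lemma sqr_le_2_sum_sqr (F : realFieldType) (s d1 d2 : F) :
  0 <= s -> s <= d1 + d2 -> s ^+ 2 <= 2 * (d1 ^+ 2 + d2 ^+ 2).
Proof.
move=> s0 sd; have := sqr_ge0 (d1 - d2).
have : s ^+ 2 <= (d1 + d2) ^+ 2 by rewrite ler_sqr ?nnegrE //; lra.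
rewrite !expr2; nra.
Qed.

Section SlopeControl.
Variable R : realType.
Implicit Types (u w : R -> R * R) (x y z : R).

Lemma Q2eq_lo u w x y : Q2eq (u x) (w y) -> lo u x = lo w y.
Proof. by rewrite /lo; case=> -[-> ->] //; rewrite minC. Qed.

Lemma Q2eq_hi u w x y : Q2eq (u x) (w y) -> hi u x = hi w y.
Proof. by rewrite /hi; case=> -[-> ->] //; rewrite maxC. Qed.

(* The only properties of pluri-diamonds the proof uses: on [x, y] both
   branches are nondecreasing and 1-Lipschitz, and their sum grows at least
   like [y - x]. *)
Definition slope_control u x y : Prop :=
  [/\ lo u x <= lo u y, lo u y - lo u x <= y - x, hi u x <= hi u y,
      hi u y - hi u x <= y - x &
      y - x <= (lo u y + hi u y) - (lo u x + hi u x)].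

Lemma slope_control_refl u x : slope_control u x x.
Proof. by split; rewrite ?subrr. Qed.

Lemma slope_control_trans u x y z :
  slope_control u x y -> slope_control u y z -> slope_control u x z.
Proof. by case=> ? ? ? ? ?; case=> ? ? ? ? ?; split; lra. Qed.

Lemma lo_diamond p q h x : p <= x -> x <= q ->
  lo (diamond p q h) x =
    if x <= (p + q) / 2 then h else h + (x - (p + q) / 2).
Proof.
by rewrite /lo /diamond => px xq; case: leP => xm /=; rewrite min_l //; lra.
Qed.

Lemma hi_diamond p q h x : p <= x -> x <= q ->
  hi (diamond p q h) x =
    if x <= (p + q) / 2 then h + (x - p) else h + (q - p) / 2.
Proof.
by rewrite /hi /diamond => px xq; case: leP => xm /=; rewrite max_r //; lra.
Qed.

Lemma slope_control_diamond u p q h :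
  (forall x, p <= x <= q -> Q2eq (u x) (diamond p q h x)) ->
  forall x y, p <= x -> x <= y -> y <= q -> slope_control u x y.
Proof.
move=> uD x y px xy yq.
have xI : p <= x <= q by apply/andP; split; lra.
have yI : p <= y <= q by apply/andP; split; lra.
rewrite /slope_control (Q2eq_lo (uD _ xI)) (Q2eq_hi (uD _ xI)).
rewrite (Q2eq_lo (uD _ yI)) (Q2eq_hi (uD _ yI)).
rewrite !lo_diamond ?hi_diamond; try lra.
by case: ifP => xm; case: ifP => ym; split; lra.
Qed.

Lemma slope_control_diagonal u p q c :
  (forall x, p <= x <= q -> Q2eq (u x) (x + c, x + c)) ->
  forall x y, p <= x -> x <= y -> y <= q -> slope_control u x y.
Proof.
move=> uD x y px xy yq.
have E z : p <= z <= q -> lo u z = z + c /\ hi u z = z + c.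
  move=> /uD zD; set w := fun z => (z + c, z + c).
  rewrite (Q2eq_lo (w := w) (y := z) zD) (Q2eq_hi (w := w) (y := z) zD).
  by rewrite /lo /hi /= minxx maxxx.
have [Lx Hx] := E x ltac:(apply/andP; split; lra).
have [Ly Hy] := E y ltac:(apply/andP; split; lra).
rewrite /slope_control Lx Hx Ly Hy; split; lra.
Qed.

Lemma slope_control_partition u n (t : nat -> R) :
  (forall j, (j < n)%N -> forall x y,
     t j <= x -> x <= y -> y <= t j.+1 -> slope_control u x y) ->
  forall x y, t 0%N <= x -> x <= y -> y <= t n -> slope_control u x y.
Proof.
move=> piece; elim: n piece => [|k IH] piece x y t0x xy ytn.
  have -> : y = x by lra.
  exact: slope_control_refl.
have {}IH := IH (fun j jk => piece j (ltnW jk)).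
have [ytk|tky] := leP y (t k); first exact: IH.
have [tkx|xtk] := leP (t k) x; first by apply: (piece k) => //; lra.
apply: (@slope_control_trans _ _ (t k)); first by apply: IH; lra.
by apply: (piece k) => //; lra.
Qed.

Lemma slope_control_pluri u : pluri_diamond u ->
  forall x y, 0 <= x -> x <= y -> y <= 1 -> slope_control u x y.
Proof.
case=> _ [n [t [t0 tn _ tpiece]]]; rewrite -t0 -tn.
apply: slope_control_partition => j jn.
case: (tpiece j jn) => [[h uD]|[c uD]].
  exact: slope_control_diamond uD.
exact: slope_control_diagonal uD.
Qed.

End SlopeControl.

Section Dirichlet.
Import numFieldNormedType.Exports.
Local Open Scope classical_set_scope.
Variable R : realType.
Notation mu := (@lebesgue_measure R).

Lemma ge0_le_integral_subset (D1 D2 : set R) (f g : R -> \bar R) :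
  (forall x, D1 x -> (0 <= f x)%E) -> (forall x, D2 x -> (0 <= g x)%E) ->
  (forall x, D1 x -> D2 x /\ (f x <= g x)%E) ->
  (\int[mu]_(x in D1) f x <= \int[mu]_(x in D2) g x)%E.
Proof.
move=> f0 g0 fg; rewrite (ge0_integralE mu f0) (ge0_integralE mu g0) /=.
apply: ge_ereal_sup => _ [h hf <-]; apply: ereal_sup_ubound; exists h => //= x.
apply: (le_trans (hf x)); rewrite /patch.
case: ifPn => [/set_mem D1x|_]; last first.
  by case: ifPn => [/set_mem D2x|_]; [exact: g0|].
by have [D2x le] := fg x D1x; rewrite mem_set.
Qed.

(* Where [f] is not derivable, [derive1 f x] is the junk value [0], which
   also lies in [[0, 1]]. *)
Lemma derive1_ge0_le1 (f : R -> R) (a b x : R) :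
  (forall y z, a <= y -> y <= z -> z <= b -> 0 <= f z - f y <= z - y) ->
  a < x -> x < b -> 0 <= derive1 f x <= 1.
Proof.
move=> H ax xb.
have Q : \forall h \near (0 : R)^', 0 <= h^-1 *: (f (h + x) - f x) <= 1.
  near=> h.
  have h0 : h != 0 by near: h; exact: nbhs_dnbhs_neq.
  have : `|h| < Num.min (x - a) (b - x).
    by near: h; apply: dnbhs0_lt; rewrite lt_min; apply/andP; split; lra.
  rewrite lt_min => /andP[hl1 hl2]; rewrite /GRing.scale /=.
  have [hp|hn] := ltP 0 h.
    rewrite gtr0_norm // in hl1 hl2.
    have /andP[H1 H2] := H x (h + x) (ltW ax) ltac:(lra) ltac:(lra).
    rewrite mulr_ge0 ?invr_ge0 ?(ltW hp) //= ler_pdivrMl // mulr1; lra.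
  have hn' : h < 0 by rewrite lt_neqAle h0.
  rewrite ltr0_norm // in hl1 hl2.
  have /andP[H1 H2] := H (h + x) x ltac:(lra) ltac:(lra) (ltW xb).
  rewrite -mulrNN -invrN -opprB mulr_ge0 ?invr_ge0 //=; try lra.
  rewrite ler_pdivrMl; lra.
rewrite /derive1.
case: (pselect (cvg ((fun h => h^-1 *: (f (h + x) - f x)) @ (0 : R)^'))) => cv.
  apply/andP; split.
    by apply: limr_ge => //; apply: filterS Q => h /andP[].
  by apply: limr_le => //; apply: filterS Q => h /andP[].
rewrite dvgP //; change (0 <= (0:R) <= 1); lra.
Unshelve. all: by end_near. Qed.

Lemma Dir_le_twice_length (u : R -> R * R) a b : a < b ->
  (forall x y, a <= x -> x <= y -> y <= b -> slope_control u x y) ->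
  (Dir u a b <= (2 * (b - a))%:E)%E.
Proof.
move=> ab ctl.
have lo01 y z : a <= y -> y <= z -> z <= b -> 0 <= lo u z - lo u y <= z - y.
  move=> ay yz zb; have [? ? ? ? ?] := ctl y z ay yz zb.
  by apply/andP; split; lra.
have hi01 y z : a <= y -> y <= z -> z <= b -> 0 <= hi u z - hi u y <= z - y.
  move=> ay yz zb; have [? ? ? ? ?] := ctl y z ay yz zb.
  by apply/andP; split; lra.
apply: (@le_trans _ _ (\int[mu]_(x in `]a, b[) (cst 2%:E) x)%E).
  apply: ge0_le_integral_subset.
  - by move=> x _; rewrite lee_fin addr_ge0 // sqr_ge0.
  - by move=> x _; rewrite lee_fin.
  move=> x xI; split => //; move: xI; rewrite /= in_itv => /andP[ax xb].
  have /andP[l1 l2] := derive1_ge0_le1 lo01 ax xb.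
  have /andP[h1 h2] := derive1_ge0_le1 hi01 ax xb.
  rewrite lee_fin; nra.
by rewrite integral_cst //= lebesgue_measure_itv /= lte_fin ab -EFinD -EFinM.
Qed.

Lemma integrable_cst_itv (a b c : R) : mu.-integrable `[a, b] (fun _ => c%:E).
Proof.
apply/integrableP; split; first exact: measurable_cst.
rewrite (eq_integral (fun _ => `|c|%:E)) // integral_cst //=.
rewrite lebesgue_measure_itv /=.
by case: ifP => _; rewrite -?EFinD -?EFinM ?mule0 ?ltry.
Qed.

Lemma integrable_sqr_itv (g : R -> R) (a b : R) :
  measurable_fun `[a, b] g ->
  (\int[mu]_(x in `[a, b]) ((g x) ^+ 2)%:E < +oo)%E ->
  mu.-integrable `[a, b] (fun x => ((g x) ^+ 2)%:E).
Proof.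
move=> mg g2; apply/integrableP; split.
  by apply/measurable_EFinP; exact: measurable_funM.
by under eq_integral => x _ do rewrite gee0_abs ?lee_fin ?sqr_ge0 //.
Qed.

Lemma integrable_sqr_itvoo (g : R -> R) (a b : R) :
  measurable_fun `[a, b] g ->
  (\int[mu]_(x in `[a, b]) ((g x) ^+ 2)%:E < +oo)%E ->
  mu.-integrable `]a, b[ (fun x => ((g x) ^+ 2)%:E).
Proof.
move=> mg gsq; apply: integrableS (integrable_sqr_itv mg gsq) => //.
exact: subset_itv_oo_cc.
Qed.

(* With [c] the mean [D / (b - a)] of [g], integrate [2 c g - c^2 <= g^2]. *)
Lemma le_integral_sqr (g : R -> R) (a b D : R) : a < b ->
  measurable_fun `[a, b] g -> mu.-integrable `[a, b] (EFin \o g) ->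
  (\int[mu]_(x in `[a, b]) ((g x) ^+ 2)%:E < +oo)%E ->
  (\int[mu]_(x in `[a, b]) (g x)%:E)%E = D%:E ->
  ((D ^+ 2 / (b - a))%:E <= \int[mu]_(x in `]a, b[) ((g x) ^+ 2)%:E)%E.
Proof.
move=> ab mg ig g2 gD.
have ig2 := integrable_sqr_itv mg g2.
rewrite -(integral_itv_bndoo true false); last first.
  apply: measurable_funS (measurable_int _ ig2) => //.
  exact: subset_itv_oo_cc.
set c := D / (b - a).
have igc : mu.-integrable `[a, b] (EFin \o (fun x => 2 * c * g x)).
  rewrite (_ : EFin \o _ = (fun x => (2 * c)%:E * (g x)%:E)%E).
    exact: integrableZl.
  by apply/funext => x; rewrite /= EFinM.
apply: (@le_trans _ _ (\int[mu]_(x in `[a, b])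
                          ((2 * c * g x)%:E - (c ^+ 2)%:E))%E).
  rewrite integralB_EFin //; last exact: integrable_cst_itv.
  under eq_integral => x _ do rewrite EFinM.
  rewrite integralZl // gD integral_cst //= lebesgue_measure_itv /= lte_fin ab.
  rewrite -!EFinM -EFinB lee_fin le_eqVlt; apply/orP; left; apply/eqP.
  by rewrite /c; field; rewrite subr_eq0 gt_eqF.
apply: le_integral => //.
- by apply: integrableB => //; exact: integrable_cst_itv.
- move=> x _; rewrite -EFinB lee_fin.
  by have := sqr_ge0 (g x - c); rewrite !expr2; nra.
Qed.

Lemma W12_derive1_ae (f : R -> R) (a b : R) : a < b -> W12 f a b ->
  exists g : R -> R, [/\ measurable_fun `[a, b] g,
    mu.-integrable `[a, b] (EFin \o g),
    (\int[mu]_(x in `[a, b]) ((g x) ^+ 2)%:E < +oo)%E,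
    (\int[mu]_(x in `[a, b]) (g x)%:E)%E = (f b - f a)%:E &
    {ae mu, forall x, a < x < b -> derive1 f x = g x}].
Proof.
move=> ab [g [mg ig g2 fg]]; exists g; split => //.
  by apply: fg; rewrite lexx ltW.
set G := g \_ `[a, b].
have GE t : a <= t <= b -> G t = g t.
  by move=> tI; rewrite /G patchE mem_set //= in_itv.
have igG : mu.-integrable [set` Interval (BLeft a) (BRight b)] (EFin \o G).
  apply: (eq_integrable _ _ _ _ ig) => //.
  by move=> t; rewrite inE /= in_itv /= => tI; rewrite GE.
have := integrable_locally (measurable_itv `[a, b]%R) ig.
move=> /lebesgue_differentiation.
apply: filterS; first exact: (ae_filter_ringOfSetsType mu).
move=> x Lx /andP[ax xb].
have aX : (BLeft a < BRight x)%E by rewrite /= lte_fin.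
rewrite -GE ?ltW //; have [dF <-] := FTC1_lebesgue_pt xb igG aX Lx.
set F := fun y => (\int[mu]_(t in [set` Interval (BLeft a) (BRight y)]) G t)%R.
have fF : \forall y \near x, f y = F y + f a.
  near=> y; have : y \in `]a, b[%R.
    by near: y; apply: near_in_itvoo; rewrite in_itv /= ax.
  rewrite in_itv /= => /andP[ay yb].
  rewrite /F /= (_ : (\int[mu]_(t in `[a, y]) G t =
                      \int[mu]_(t in `[a, y]) g t)%R).
    by rewrite /Rintegral fg ?ltW ?ay ?yb //= subrK.
  apply: eq_Rintegral => t; rewrite inE /= in_itv /= => /andP[aLt tLy].
  by rewrite GE // aLt /= (le_trans tLy (ltW yb)).
rewrite !derive1E (near_eq_derive (g := F + cst (f a)) _ fF).
by rewrite deriveD // derive_cst addr0.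
Unshelve. all: by end_near. Qed.

Lemma Dir_ge_boundary (v : R -> R * R) (a b : R) : a < b -> Q2_W12 v a b ->
  ((((lo v b - lo v a) ^+ 2 + (hi v b - hi v a) ^+ 2) / (b - a))%:E
     <= Dir v a b)%E.
Proof.
move=> ab [W1 W2].
have [g1 [mg1 ig1 g12 g1D ae1]] := W12_derive1_ae ab W1.
have [g2 [mg2 ig2 g22 g2D ae2]] := W12_derive1_ae ab W2.
have [N [mN N0 sN]] : {ae mu, forall x, a < x < b ->
    derive1 (lo v) x = g1 x /\ derive1 (hi v) x = g2 x}.
  apply: filterS2 ae1 ae2; first exact: (ae_filter_ringOfSetsType mu).
  by move=> x e1 e2 xI; split; [exact: e1|exact: e2].
have moo : measurable (`]a, b[ : set R) by exact: measurable_itv.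
have sqr0 (g : R -> R) x : `]a, b[ x -> (0 <= ((g x) ^+ 2)%:E)%E.
  by rewrite lee_fin sqr_ge0.
have i1 := integrable_sqr_itvoo mg1 g12.
have i2 := integrable_sqr_itvoo mg2 g22.
apply: (@le_trans _ _ (\int[mu]_(x in `]a, b[) ((g1 x) ^+ 2)%:E +
                       \int[mu]_(x in `]a, b[) ((g2 x) ^+ 2)%:E)%E).
  by rewrite mulrDl EFinD; apply: leeD; apply: le_integral_sqr.
rewrite -(ge0_integralD mu moo (sqr0 g1) (measurable_int _ i1) (sqr0 g2)
  (measurable_int _ i2)).
rewrite (negligible_integral mN moo _ N0); last first.
  exact: integrableD i1 i2.
apply: ge0_le_integral_subset.
- by move=> x _; rewrite adde_ge0 // lee_fin sqr_ge0.
- by move=> x _; rewrite lee_fin addr_ge0 // sqr_ge0.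
move=> x [xI Nx]; split => //.
have xab : a < x < b by move: xI; rewrite /= in_itv.
have [e1 e2] : derive1 (lo v) x = g1 x /\ derive1 (hi v) x = g2 x.
  have [P|nP] := pselect (a < x < b ->
    derive1 (lo v) x = g1 x /\ derive1 (hi v) x = g2 x); first exact: P xab.
  by exfalso; exact: Nx (sN _ nP).
by rewrite e1 e2 EFinD.
Qed.

End Dirichlet.

Theorem mainTheorem4 (R : realType) (u : R -> R * R) :
  pluri_diamond u ->
  forall a b : R, 0 <= a -> a < b -> b <= 1 ->
  forall v : R -> R * R, dir_minimizing v a b (u a) (u b) ->
    (Dir u a b <= 4%:E * Dir v a b)%E.
Proof.
move=> pu a b a0 ab b1 v [vW va vb _].
have ctl x y : a <= x -> x <= y -> y <= b -> slope_control u x y.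
  by move=> ax xy yb; apply: slope_control_pluri => //; lra.
have [_ _ _ _ grow] := ctl a b (lexx a) (ltW ab) (lexx b).
have low := Dir_ge_boundary ab vW.
rewrite (Q2eq_lo va) (Q2eq_lo vb) (Q2eq_hi va) (Q2eq_hi vb) in low.
apply: le_trans (Dir_le_twice_length ab ctl) _.
apply: le_trans (lee_wpmul2l _ low) => //.
rewrite -EFinM lee_fin mulrA ler_pdivlMr ?subr_gt0 //.
have := sqr_le_2_sum_sqr (s := b - a)
  (d1 := lo u b - lo u a) (d2 := hi u b - hi u a).
rewrite !expr2; nra.
Qed.
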